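(* Let $\mathcal{P}$ be a dipath space and let $f: P \to V(\mathcal{P})$ be a walk in $\mathcal{P}$. Then the space $\widehat{f}$ induced by $f$ is finitary and connected.
   Context: A subset $Y$ of a linearly ordered set $X$ is called complete (in $X$) if every nonempty $Z \subseteq Y$ has a supremum and an infimum in $X$ and both lie in $Y$. A path is a linearly ordered set $(P,\le_P)$ that is complete in itself. Distinct paths may share elements; intersections and unions of paths refer to their underlying sets. A path is trivial if it has exactly one element. A set of paths is compatible if for any two paths $P,Q$ in it, $P\cap Q$ is complete in $P$ (with the order of $P$). For $x \le y$ in a path $P$, the segment of $P$ from $x$ to $y$ is the interval $[x,y]$ of $P$ with the induced order. A path $P$ connects to a path $Q$ if $P \cap Q=\{x\}$ where $x=\max P=\min Q$; in this case the concatenation of $P$ and $Q$ is $P\cup Q$ with the order extending both orders in which every element of $P$ precedes every element of $Q$. The inverse of a path is the same set with the reversed order. A dipath space is a compatible set of paths closed under segments and under concatenations (whenever $P,Q$ are members and $P$ connects to $Q$, their concatenation is a member). A path space is a dipath space closed under inverses. The ground set $V(\mathcal{P})$ is the union of the underlying sets of the paths of $\mathcal{P}$. For a set of paths $\mathcal{Q}$, $\widehat{\mathcal{Q}}$ denotes the set obtained by first adding all segments of paths of $\mathcal{Q}$ and then closing under concatenations (repeatedly adding, in countably many steps, concatenations of pairs of paths obtained so far where the first connects to the second); $\overline{\mathcal{Q}}$ denotes $\widehat{\mathcal{Q}'}$ where $\mathcal{Q}'$ is $\mathcal{Q}$ together with the inverses of its paths. For a path space $\mathcal{S}$, write $x\sim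 y$ if some path of $\mathcal{S}$ has minimum $x$ and maximum $y$; $\mathcal{S}$ is connected if $V(\mathcal{S})$ is a single $\sim$-class; a dipath space $\mathcal{S}$ is connected if $\overline{\mathcal{S}}$ is connected. A dipath space $\mathcal{S}$ is finitary if there is a finite set of paths $\mathcal{Q}$ with $\widehat{\mathcal{Q}}=\mathcal{S}$. Walks: Let $P$ be a path (not necessarily in $\mathcal{P}$). For a closed interval $I$ of $P$ on which $f$ is injective, $f[I]$ denotes the image of $I$ ordered so that $f$ is order-preserving. A walk in $\mathcal{P}$ is a map $f:P\to V(\mathcal{P})$ such that for every $x\in P$: if $x\neq\max P$ there is $y>x$ such that for every $z$ with $x<z\le y$, $f$ is injective on $[x,z]$ and $f[[x,z]]\in\mathcal{P}$; and if $x\neq \min P$ there is $y<x$ such that for every $z$ with $y\le z<x$, $f$ is injective on $[z,x]$ and $f[[z,x]]\in\mathcal{P}$. Let $\mathcal{S}_f$ be the set of all paths $f[I]$, where $I$ is a closed interval of $P$ on which $f$ is injective and $f[I]\in\mathcal{P}$. The space induced by $f$ is $\widehat{f}:=\widehat{\mathcal{S}_f}$. *)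

From Stdlib Require Import List.
Set Implicit Arguments.

(** A (candidate) path over an ambient type [T]: an underlying set together
    with an order relation on it.  Whether it really is a path is the
    predicate [is_path] below. *)
Record path (T : Type) := mkPath { pset : T -> Prop; ple : T -> T -> Prop }.
Arguments mkPath {T}.
Arguments pset {T}.
Arguments ple {T}.

Section Defs.
Variable T : Type.

Definition is_sup (X : T -> Prop) (le : T -> T -> Prop) (Z : T -> Prop) (s : T) :=
  X s /\ (forall z, Z z -> le z s) /\
  (forall u, X u -> (forall z, Z z -> le z u) -> le s u).
Definition is_inf (X : T -> Prop) (le : T -> T -> Prop) (Z : T -> Prop) (i : T) :=
  X i /\ (forall z, Z z -> le i z) /\
  (forall u, X u -> (forall z, Z z -> le u z) -> le u i).

Definition complete_in (X : T -> Prop) (le : T -> T -> Prop) (Y : T -> Prop) :=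
  forall Z : T -> Prop, (forall z, Z z -> Y z) -> (exists z, Z z) ->
    (exists s, is_sup X le Z s /\ Y s) /\ (exists i, is_inf X le Z i /\ Y i).

Definition is_path (P : path T) :=
  (forall x y, ple P x y -> pset P x /\ pset P y) /\
  (forall x, pset P x -> ple P x x) /\
  (forall x y, ple P x y -> ple P y x -> x = y) /\
  (forall x y z, ple P x y -> ple P y z -> ple P x z) /\
  (forall x y, pset P x -> pset P y -> ple P x y \/ ple P y x) /\
  (exists x, pset P x) /\
  complete_in (pset P) (ple P) (pset P).

Definition is_max (P : path T) (x : T) :=
  pset P x /\ forall u, pset P u -> ple P u x.
Definition is_min (P : path T) (x : T) :=
  pset P x /\ forall u, pset P u -> ple P x u.

Definition compatible (S : path T -> Prop) :=
  forall P Q, S P -> S Q ->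
    complete_in (pset P) (ple P) (fun t => pset P t /\ pset Q t).

Definition in_seg (P : path T) (x y : T) (z : T) := ple P x z /\ ple P z y.

Definition segment (P : path T) (x y : T) : path T :=
  mkPath (in_seg P x y)
         (fun a b => ple P a b /\ in_seg P x y a /\ in_seg P x y b).

Definition connects (P Q : path T) :=
  exists x, (forall t, (pset P t /\ pset Q t) <-> t = x) /\ is_max P x /\ is_min Q x.

Definition concat (P Q : path T) : path T :=
  mkPath (fun t => pset P t \/ pset Q t)
         (fun a b => ple P a b \/ ple Q a b \/ (pset P a /\ pset Q b)).

Definition inverse (P : path T) : path T :=
  mkPath (pset P) (fun a b => ple P b a).

Definition dipath_space (S : path T -> Prop) :=
  (forall P, S P -> is_path P) /\
  compatible S /\
  (forall P x y, S P -> ple P x y -> S (segment P x y)) /\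
  (forall P Q, S P -> S Q -> connects P Q -> S (concat P Q)).

Definition path_space (S : path T -> Prop) :=
  dipath_space S /\ (forall P, S P -> S (inverse P)).

Definition ground (S : path T -> Prop) (t : T) := exists P, S P /\ pset P t.

(** [hat Q]: add all segments of paths of [Q], then close under
    concatenations (least closure = union of the countably many steps). *)
Inductive hat (Q : path T -> Prop) : path T -> Prop :=
| hat_seg : forall P x y, Q P -> ple P x y -> hat Q (segment P x y)
| hat_cat : forall P1 P2, hat Q P1 -> hat Q P2 -> connects P1 P2 ->
              hat Q (concat P1 P2).

Definition bar (Q : path T -> Prop) : path T -> Prop :=
  hat (fun R => Q R \/ exists P, Q P /\ R = inverse P).

Definition sim (S : path T -> Prop) (x y : T) :=
  exists P, S P /\ is_min P x /\ is_max P y.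

Definition ps_connected (S : path T -> Prop) :=
  (exists x, ground S x) /\ (forall x y, ground S x -> ground S y -> sim S x y).

Definition dps_connected (S : path T -> Prop) := ps_connected (bar S).

Definition finitary (S : path T -> Prop) :=
  exists Q : list (path T), (forall R, In R Q -> is_path R) /\
    (forall R, hat (fun R' => In R' Q) R <-> S R).

End Defs.

Section Walks.
Variables U T : Type.

Definition injective_on (f : U -> T) (I : U -> Prop) :=
  forall u v, I u -> I v -> f u = f v -> u = v.

(** [f[[x,y]]]: the image of the interval [x,y] of [P], ordered so that [f]
    is order preserving (meaningful when f is injective on [x,y]). *)
Definition image_path (P : path U) (f : U -> T) (x y : U) : path T :=
  mkPath (fun t => exists u, in_seg P x y u /\ f u = t)
         (fun a b => exists u v, in_seg P x y u /\ in_seg P x y v /\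
                      ple P u v /\ f u = a /\ f v = b).

Definition walk (PP : path T -> Prop) (P : path U) (f : U -> T) :=
  (forall x, pset P x -> ground PP (f x)) /\
  forall x, pset P x ->
    (~ is_max P x ->
       exists y, ple P x y /\ x <> y /\
         forall z, ple P x z -> x <> z -> ple P z y ->
           injective_on f (in_seg P x z) /\ PP (image_path P f x z)) /\
    (~ is_min P x ->
       exists y, ple P y x /\ y <> x /\
         forall z, ple P y z -> ple P z x -> z <> x ->
           injective_on f (in_seg P z x) /\ PP (image_path P f z x)).

Definition S_f (PP : path T -> Prop) (P : path U) (f : U -> T) : path T -> Prop :=
  fun R => exists x y, ple P x y /\ injective_on f (in_seg P x y) /\
             PP (image_path P f x y) /\ R = image_path P f x y.

Definition induced (PP : path T -> Prop) (P : path U) (f : U -> T) :=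
  hat (S_f PP P f).

End Walks.

(** Call an interval
    [[x, y]] of [P] admissible if [f] is injective on it and its image is a
    path of [PP]; the generators [S_f] of the induced space are exactly these
    images.

    - Compactness: since [P] is a complete linear order and every point has
      admissible intervals on both sides, the supremum of the points reachable
      from [min P] by a finite chain of admissible intervals is reachable and
      equals [max P].  Hence [P] is covered by a finite chain.
    - Finitary: the image of an admissible interval is cut by the chain into
      segments of images of pieces, glued by concatenation, so the finitely
      many images of the pieces generate the induced space.
    - Connected: the induced space is a dipath space, where reachability is
      transitive (by compatibility); gluing along the chain joins [f u] to
      [f v] for all [u <= v], and inverses give the reverse direction. *)

From Stdlib Require Import List Classical FunctionalExtensionality PropExtensionality.

Section Paths.
Context {T : Type}.
Implicit Types R B : path T.

Lemma path_ext R R' : (forall t, pset R t <-> pset R' t) ->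
  (forall a b, ple R a b <-> ple R' a b) -> R = R'.
Proof.
  destruct R as [s l], R' as [s' l']; simpl; intros Hs Hl.
  assert (s = s') by (apply functional_extensionality; intro;
    apply propositional_extensionality; auto).
  assert (l = l') by (do 2 (apply functional_extensionality; intro);
    apply propositional_extensionality; auto).
  subst; reflexivity.
Qed.

Lemma path_mem {R a b} : is_path R -> ple R a b -> pset R a /\ pset R b.
Proof. intros H; apply H. Qed.
Lemma path_refl {R a} : is_path R -> pset R a -> ple R a a.
Proof. intros H; apply H. Qed.
Lemma path_antisym {R a b} : is_path R -> ple R a b -> ple R b a -> a = b.
Proof. intros H; apply H. Qed.
Lemma path_trans {R a b c} : is_path R -> ple R a b -> ple R b c -> ple R a c.
Proof. intros H; apply H. Qed.
Lemma path_total {R a b} : is_path R -> pset R a -> pset R b -> ple R a b \/ ple R b a.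
Proof. intros H; apply H. Qed.

Lemma path_sup R (Z : T -> Prop) : is_path R -> (forall z, Z z -> pset R z) ->
  (exists z, Z z) -> exists s, is_sup (pset R) (ple R) Z s.
Proof.
  intros HR HZ Hne. destruct (proj2 (proj2 (proj2 (proj2 (proj2 (proj2 HR))))) Z HZ Hne)
    as [[s [Hs _]] _]. eauto.
Qed.

Lemma path_min R : is_path R -> exists a, is_min R a.
Proof.
  intros HR. destruct (proj1 (proj2 (proj2 (proj2 (proj2 (proj2 HR)))))) as [x Hx].
  destruct (proj2 (proj2 (proj2 (proj2 (proj2 (proj2 HR))))) (pset R) (fun z h => h)
    (ex_intro _ x Hx)) as [_ [a [[Ha [Hlow _]] _]]].
  exists a; split; auto.
Qed.

Lemma segment_minmax {B x y} : ple B x x -> ple B y y -> ple B x y ->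
  is_min (segment B x y) x /\ is_max (segment B x y) y.
Proof.
  intros Hxx Hyy Hxy. unfold is_min, is_max, in_seg; simpl; unfold in_seg.
  repeat split; intuition.
Qed.

Lemma segment_minmax_path {B x y} : is_path B -> ple B x y ->
  is_min (segment B x y) x /\ is_max (segment B x y) y.
Proof.
  intros HB Hxy. destruct (path_mem HB Hxy).
  apply segment_minmax; auto; apply (path_refl HB); auto.
Qed.

Lemma segment_segment B x y a b : is_path B -> ple (segment B x y) a b ->
  segment (segment B x y) a b = segment B a b.
Proof.
  intros HB [Hab [[Hxa Hay] [Hxb Hby]]].
  assert (Hs : forall z, in_seg (segment B x y) a b z <-> in_seg B a b z).
  { intro z; unfold in_seg; simpl; unfold in_seg; split.
    - intros [[H1 _] [H2 _]]; auto.
    - intros [H1 H2].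
      pose proof (path_trans HB Hxa H1). pose proof (path_trans HB H2 Hby). tauto. }
  apply path_ext; [intro t; apply Hs|].
  intros c d; simpl; rewrite (Hs c), (Hs d); unfold in_seg; split; [tauto|].
  intros [H [[H1 H2] [H3 H4]]].
  pose proof (path_trans HB Hxa H1). pose proof (path_trans HB H2 Hby).
  pose proof (path_trans HB Hxa H3). pose proof (path_trans HB H4 Hby). tauto.
Qed.

Section Concat.
Variables (R1 R2 : path T) (m : T).
Hypotheses (HR1 : is_path R1) (HR2 : is_path R2).
Hypothesis Hmeet : forall t, pset R1 t /\ pset R2 t <-> t = m.
Hypotheses (Hmax : is_max R1 m) (Hmin : is_min R2 m).

Let meet_point {t} : pset R1 t -> pset R2 t -> t = m.
Proof. intros; apply Hmeet; auto. Qed.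

Lemma concat_le_left c d : pset R1 c -> pset R1 d -> ple (concat R1 R2) c d -> ple R1 c d.
Proof.
  intros Hc Hd [H|[H|[_ H2]]]; auto.
  - destruct (path_mem HR2 H). rewrite (meet_point Hc), (meet_point Hd); auto.
    apply (path_refl HR1); apply Hmax.
  - rewrite (meet_point Hd H2). apply Hmax; auto.
Qed.

Lemma concat_le_right c d : pset R2 c -> pset R2 d -> ple (concat R1 R2) c d -> ple R2 c d.
Proof.
  intros Hc Hd [H|[H|[H1 _]]]; auto.
  - destruct (path_mem HR1 H) as [Hc1 Hd1].
    rewrite (meet_point Hc1 Hc), (meet_point Hd1 Hd).
    apply (path_refl HR2); apply Hmin.
  - rewrite (meet_point H1 Hc). apply Hmin; auto.
Qed.

Lemma concat_down_left z b : pset R1 b -> ple (concat R1 R2) z b -> pset R1 z.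
Proof.
  intros Hb [H|[H|[H1 _]]]; [apply (path_mem HR1 H) | | auto].
  destruct (path_mem HR2 H) as [Hz Hb2]. pose proof (meet_point Hb Hb2); subst b.
  assert (z = m) by (apply (path_antisym HR2); auto; apply Hmin; auto).
  subst; apply Hmax.
Qed.

Lemma concat_up_right a z : pset R2 a -> ple (concat R1 R2) a z -> pset R2 z.
Proof.
  intros Ha [H|[H|[_ H2]]]; [ | apply (path_mem HR2 H) | auto].
  destruct (path_mem HR1 H) as [Ha1 Hz]. pose proof (meet_point Ha1 Ha); subst a.
  assert (z = m) by (apply (path_antisym HR1); auto; apply Hmax; auto).
  subst; apply Hmin.
Qed.

Lemma segment_concat_left a b : ple R1 a b -> segment (concat R1 R2) a b = segment R1 a b.
Proof.
  intros Hab. destruct (path_mem HR1 Hab) as [Ha Hb].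
  assert (Hs : forall z, in_seg (concat R1 R2) a b z <-> in_seg R1 a b z).
  { intro z; split; [|intros [H1 H2]; split; simpl; auto].
    intros [H1 H2]. pose proof (concat_down_left _ _ Hb H2).
    split; apply concat_le_left; auto. }
  apply path_ext; [intro t; apply Hs|].
  intros c d; simpl; rewrite (Hs c), (Hs d); split; [|intros [H HH]; auto].
  intros [H [Hc Hd]]. split; auto. apply concat_le_left; auto.
  - apply (path_mem HR1 (proj1 Hc)).
  - apply (path_mem HR1 (proj1 Hd)).
Qed.

Lemma segment_concat_right a b : ple R2 a b -> segment (concat R1 R2) a b = segment R2 a b.
Proof.
  intros Hab. destruct (path_mem HR2 Hab) as [Ha Hb].
  assert (Hs : forall z, in_seg (concat R1 R2) a b z <-> in_seg R2 a b z).
  { intro z; split; [|intros [H1 H2]; split; simpl; auto].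
    intros [H1 H2]. pose proof (concat_up_right _ _ Ha H1).
    split; apply concat_le_right; auto. }
  apply path_ext; [intro t; apply Hs|].
  intros c d; simpl; rewrite (Hs c), (Hs d); split; [|intros [H HH]; auto].
  intros [H [Hc Hd]]. split; auto. apply concat_le_right; auto.
  - apply (path_mem HR2 (proj1 Hc)).
  - apply (path_mem HR2 (proj1 Hd)).
Qed.

Lemma segment_concat_across a b : pset R1 a -> pset R2 b ->
  segment (concat R1 R2) a b = concat (segment R1 a m) (segment R2 m b).
Proof.
  intros Ha Hb.
  assert (Hs : forall z, in_seg (concat R1 R2) a b z <-> in_seg R1 a m z \/ in_seg R2 m b z).
  { intro z; split.
    - intros [H1 H2]. destruct (classic (pset R1 z)) as [Hz|Hz].
      + left; split; [apply concat_le_left | apply Hmax]; auto.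
      + assert (pset R2 z) by (destruct H1 as [H|[H|[_ H]]];
          [destruct Hz; apply (path_mem HR1 H) | apply (path_mem HR2 H) | exact H]).
        right; split; [apply Hmin | apply concat_le_right]; auto.
    - intros [[H1 H2]|[H1 H2]]; split; simpl.
      + auto.
      + destruct (path_mem HR1 H1); auto.
      + destruct (path_mem HR2 H2); auto.
      + auto. }
  apply path_ext; [intro t; simpl; apply Hs|].
  intros c d; simpl; rewrite (Hs c), (Hs d). split.
  - intros [H [Hc Hd]]. destruct Hd as [Hd|Hd].
    + assert (Hc1 : in_seg R1 a m c).
      { destruct Hc as [Hc|Hc]; auto.
        assert (Hc1 : pset R1 c)
          by (apply (concat_down_left c d); [apply (path_mem HR1 (proj1 Hd)) | exact H]).
        rewrite (meet_point Hc1 (proj1 (path_mem HR2 (proj2 Hc)))).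
        split; [apply Hmax; auto | apply (path_refl HR1); apply Hmax]. }
      left; repeat split; try apply Hc1; try apply Hd. apply concat_le_left; auto.
      * apply (path_mem HR1 (proj2 Hc1)).
      * apply (path_mem HR1 (proj2 Hd)).
    + destruct Hc as [Hc|Hc]; [right; right; split; auto|].
      right; left; repeat split; try apply Hc; try apply Hd. apply concat_le_right; auto.
      * apply (path_mem HR2 (proj1 Hc)).
      * apply (path_mem HR2 (proj1 Hd)).
  - intros [[H [Hc Hd]]|[[H [Hc Hd]]|[Hc Hd]]]; split; auto.
    right; right. split; [apply (path_mem HR1 (proj1 Hc)) | apply (path_mem HR2 (proj2 Hd))].
Qed.

End Concat.

Lemma hat_mono (Q Q' : path T -> Prop) R : (forall X, Q X -> Q' X) -> hat Q R -> hat Q' R.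
Proof. intros HQ H; induction H; constructor; auto. Qed.

Lemma hat_point (Q : path T -> Prop) R t :
  (forall X a b, Q X -> ple X a b -> pset X a /\ pset X b) ->
  hat Q R -> pset R t -> exists X, Q X /\ pset X t.
Proof.
  intros HQ H; revert t; induction H; intros t Ht.
  - destruct Ht as [H1 _]. exists P; split; auto. eapply HQ; eauto.
  - destruct Ht; auto.
Qed.

Lemma ground_hat (Q : path T -> Prop) t : (forall X, Q X -> is_path X) ->
  ground (hat Q) t -> ground Q t.
Proof.
  intros HQ [R [HR Ht]]. apply (hat_point Q R t); auto.
  intros X a b HX; apply (path_mem (HQ X HX)).
Qed.

Lemma ground_bar (S : path T -> Prop) t : (forall X, S X -> is_path X) ->
  ground (bar S) t -> ground S t.
Proof.
  intros HS [R [HR Ht]].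
  destruct (hat_point (fun R => S R \/ exists P, S P /\ R = inverse P) R t) as [X [[HX|[Y [HY ->]]] HXt]]; auto; try (exists X; auto).
  - intros X a b [HX|[Y [HY ->]]] Hab; [apply (path_mem (HS X HX) Hab)|].
    destruct (path_mem (HS Y HY) Hab); split; auto.
  - exists Y; auto.
Qed.

(** If all paths of [hat Q] are paths, then [hat Q] is closed under
    segments: a segment of a concatenation splits into segments of the parts. *)
Lemma hat_segment_closed (Q : path T -> Prop) :
  (forall B, Q B -> is_path B) -> (forall R, hat Q R -> is_path R) ->
  forall R, hat Q R -> forall a b, ple R a b -> hat Q (segment R a b).
Proof.
  intros HQ HH R H; induction H as [B x y HB Hxy|R1 R2 H1 IH1 H2 IH2 Hcon];
    intros a b Hab.
  - rewrite segment_segment; auto. apply hat_seg; auto. apply Hab.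
  - destruct Hcon as [m [Hm [Hmax Hmin]]].
    pose proof (HH _ H1) as P1. pose proof (HH _ H2) as P2.
    destruct Hab as [Hab|[Hab|[Ha Hb]]].
    + rewrite segment_concat_left with (m := m); auto.
    + rewrite segment_concat_right with (m := m); auto.
    + rewrite segment_concat_across with (m := m); auto.
      assert (Ham : ple R1 a m) by (apply Hmax; auto).
      assert (Hmb : ple R2 m b) by (apply Hmin; auto).
      apply hat_cat; [apply IH1; auto | apply IH2; auto|].
      exists m; split;
        [|split; [apply (segment_minmax_path P1 Ham) | apply (segment_minmax_path P2 Hmb)]].
      intro t; simpl; unfold in_seg; split.
      * intros [[_ H3] [H4 _]]. apply Hm.
        split; [apply (path_mem P1 H3) | apply (path_mem P2 H4)].
      * intros ->. pose proof (path_refl P1 (proj1 Hmax)).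
        pose proof (path_refl P2 (proj1 Hmin)). tauto.
Qed.

Lemma hat_dipath_space (S Q : path T -> Prop) : dipath_space S -> (forall R, Q R -> S R) ->
  dipath_space (hat Q).
Proof.
  intros [Hpath [Hcomp [Hseg Hcat]]] HQ.
  assert (Hsub : forall R, hat Q R -> S R)
    by (induction 1; [apply Hseg | apply Hcat]; auto).
  split; [|split; [|split]].
  - auto.
  - intros R R' HR HR'. apply Hcomp; auto.
  - intros R a b HR Hab; apply hat_segment_closed; auto.
  - intros; apply hat_cat; auto.
Qed.

Lemma concat_minmax A B x y : is_min A x -> is_max B y ->
  is_min (concat A B) x /\ is_max (concat A B) y.
Proof. intros [Hx Hx'] [Hy Hy']. split; split; simpl; auto; intros u [Hu|Hu]; auto. Qed.

Definition reach (S : path T -> Prop) x y := exists R, S R /\ is_min R x /\ is_max R y.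

(** Reachability in a dipath space is transitive: cut the first path at the
    first point where it meets the second one (which exists by compatibility). *)
Lemma reach_trans (S : path T -> Prop) : dipath_space S ->
  forall x y z, reach S x y -> reach S y z -> reach S x z.
Proof.
  intros [Hpath [Hcomp [Hseg Hcat]]] x y z [R1 [H1 [Hx1 Hy1]]] [R2 [H2 [Hy2 Hz2]]].
  pose proof (Hpath _ H1) as P1. pose proof (Hpath _ H2) as P2.
  destruct (Hcomp R1 R2 H1 H2 (fun t => pset R1 t /\ pset R2 t)) as
    [_ [w [[Hw1 [Hwlow _]] [Hw1' Hw2]]]]; [auto | exists y; split; [apply Hy1|apply Hy2]|].
  assert (Hxw : ple R1 x w) by (apply Hx1; auto).
  assert (Hwz : ple R2 w z) by (apply Hz2; auto).
  destruct (segment_minmax_path P1 Hxw) as [Mi1 Ma1].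
  destruct (segment_minmax_path P2 Hwz) as [Mi2 Ma2].
  exists (concat (segment R1 x w) (segment R2 w z)); split; [|apply concat_minmax; auto].
  apply Hcat; auto. exists w; split; auto.
  intro t; simpl; unfold in_seg; split.
  - intros [[Ha Hb] [Hc _]]. apply (path_antisym P1); auto. apply Hwlow.
    split; [apply (path_mem P1 Ha) | apply (path_mem P2 Hc)].
  - intros ->. pose proof (path_refl P1 Hw1'). pose proof (path_refl P2 Hw2). tauto.
Qed.

Lemma reach_sim (S : path T -> Prop) x y : (forall R, S R -> is_path R) -> reach S x y ->
  sim (bar S) x y /\ sim (bar S) y x.
Proof.
  intros HS [R [HR [Hx Hy]]].
  pose proof (HS R HR) as PR.
  pose proof (path_refl PR (proj1 Hx)). pose proof (path_refl PR (proj1 Hy)).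
  assert (Hxy : ple R x y) by (apply Hy; apply Hx).
  split.
  - exists (segment R x y); split; [apply hat_seg; auto | apply segment_minmax; auto].
  - exists (segment (inverse R) y x); split.
    + apply hat_seg; [right; eauto | exact Hxy].
    + apply segment_minmax; auto.
Qed.

End Paths.

Section Compactness.
Context {U : Type} (P : path U) (good : U -> U -> Prop).
Hypothesis HP : is_path P.
Hypothesis good_refl : forall a, pset P a -> good a a.
Hypothesis good_local : forall x, pset P x ->
  (~ is_max P x -> exists y, ple P x y /\ x <> y /\
     forall z, ple P x z -> x <> z -> ple P z y -> good x z) /\
  (~ is_min P x -> exists y, ple P y x /\ y <> x /\
     forall z, ple P y z -> ple P z x -> z <> x -> good z x).

(** [chain a t L]: [L] lists consecutive good intervals [(s_i, s_(i+1))]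
    from [a] to [t], the last one first. *)
Inductive chain (a : U) : U -> list (U * U) -> Prop :=
| chain_one t : ple P a t -> good a t -> chain a t ((a, t) :: nil)
| chain_snoc s t L : chain a s L -> ple P s t -> good s t -> chain a t ((s, t) :: L).

Lemma chain_pieces {a t L} : chain a t L -> forall c d, In (c, d) L -> ple P c d /\ good c d.
Proof.
  induction 1; intros c d Hcd; simpl in Hcd; destruct Hcd as [Hcd|Hcd];
    try (injection Hcd; intros; subst); auto; contradiction.
Qed.

Definition chained a t := pset P t /\ exists L, chain a t L.

(** The supremum of the chained points is chained: approach it from the
    left within one good interval. *)
Lemma chained_sup a s : is_min P a -> is_sup (pset P) (ple P) (chained a) s -> chained a s.
Proof.
  intros Hamin [Hs [Hup Hlub]].
  destruct (classic (is_min P s)) as [Hsmin|Hnmin].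
  { assert (s = a) by (apply (path_antisym HP); [apply Hsmin, Hamin | apply Hamin, Hs]).
    subst s; split; auto. exists ((a, a) :: nil).
    apply chain_one; [apply (path_refl HP) | apply good_refl]; auto. }
  destruct (proj2 (good_local s Hs) Hnmin) as [y [Hys [Hneq Hgood]]].
  destruct (classic (exists g, chained a g /\ ~ ple P g y)) as [[g [Gg Hng]]|Hno].
  - destruct (path_total HP (proj1 (path_mem HP Hys)) (proj1 Gg)) as [Hyg|Hgy];
      [|contradiction].
    destruct (classic (g = s)) as [<-|Hgs]; auto.
    pose proof (Hup g Gg) as Hgs_le.
    destruct Gg as [_ [L HL]]. split; auto. exists ((g, s) :: L).
    apply chain_snoc; auto.
  - exfalso. apply Hneq, (path_antisym HP Hys), Hlub; [apply (path_mem HP Hys)|].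
    intros z Gz. apply NNPP; intro Hc. apply Hno; eauto.
Qed.

(** A chained upper bound of the chained points is the maximum: otherwise a
    good interval to its right would extend the chain past it. *)
Lemma chained_sup_max a s : (forall t, chained a t -> ple P t s) -> chained a s ->
  is_max P s.
Proof.
  intros Hup [Hs [L HL]].
  destruct (classic (is_max P s)) as [Hm|Hnm]; auto.
  destruct (proj1 (good_local s Hs) Hnm) as [y [Hsy [Hneq Hgood]]].
  exfalso; apply Hneq, (path_antisym HP Hsy), Hup.
  split; [apply (path_mem HP Hsy)|]. exists ((s, y) :: L).
  apply chain_snoc; auto. apply Hgood; auto. apply (path_refl HP), (path_mem HP Hsy).
Qed.

Lemma exists_chain : exists a m L, is_min P a /\ is_max P m /\ chain a m L.
Proof.
  destruct (path_min P HP) as [a Hamin].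
  assert (Ga : chained a a).
  { split; [apply Hamin|]. exists ((a, a) :: nil).
    apply chain_one; [apply (path_refl HP) | apply good_refl]; apply Hamin. }
  destruct (path_sup P (chained a) HP (fun z h => proj1 h) (ex_intro _ a Ga))
    as [s Hsup].
  pose proof (chained_sup a s Hamin Hsup) as Gs.
  pose proof (chained_sup_max a s (proj1 (proj2 Hsup)) Gs) as Hsmax.
  destruct Gs as [_ [L HL]]. exists a, s, L; auto.
Qed.

Lemma chain_glue (Phi : U -> U -> Prop) {a t L} : chain a t L ->
  (forall c d u v, In (c, d) L -> ple P c u -> ple P u v -> ple P v d -> Phi u v) ->
  (forall u s v, ple P u s -> ple P s v -> Phi u s -> Phi s v -> Phi u v) ->
  forall u v, ple P a u -> ple P u v -> ple P v t -> Phi u v.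
Proof.
  intros Hch Hpiece Hglue; induction Hch as [t Hat Hg|s t L Hch IH Hst Hg];
    intros u v Hau Huv Hvt.
  - apply (Hpiece a t); simpl; auto.
  - assert (Hsmem : pset P s) by apply (path_mem HP Hst).
    pose proof (path_refl HP Hsmem) as Hss.
    assert (HIH : forall u v, ple P a u -> ple P u v -> ple P v s -> Phi u v)
      by (apply IH; intros c d u' v' HIn; apply (Hpiece c d); simpl; auto).
    destruct (path_total HP (proj2 (path_mem HP Huv)) Hsmem) as [Hvs|Hsv]; auto.
    destruct (path_total HP (proj1 (path_mem HP Huv)) Hsmem) as [Hus|Hsu].
    + apply (Hglue u s v); auto. apply (Hpiece s t); simpl; auto.
    + apply (Hpiece s t); simpl; auto.
Qed.

End Compactness.

Section Images.
Context {U T : Type} (P : path U) (f : U -> T).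
Hypothesis HP : is_path P.

Local Notation img := (image_path P f).

Lemma injective_on_sub {x y u v} : injective_on f (in_seg P x y) ->
  ple P x u -> ple P v y -> injective_on f (in_seg P u v).
Proof.
  intros H Hxu Hvy w1 w2 [A1 A2] [B1 B2]. apply H.
  - split; [exact (path_trans HP Hxu A1) | exact (path_trans HP A2 Hvy)].
  - split; [exact (path_trans HP Hxu B1) | exact (path_trans HP B2 Hvy)].
Qed.

Lemma image_le {c d u v} : ple P c u -> ple P u v -> ple P v d -> ple (img c d) (f u) (f v).
Proof.
  intros Hcu Huv Hvd. exists u, v.
  repeat split; auto; try apply (path_refl HP); try apply (path_mem HP Huv).
  - exact (path_trans HP Huv Hvd).
  - exact (path_trans HP Hcu Huv).
Qed.

Lemma image_minmax x y : ple P x y -> is_min (img x y) (f x) /\ is_max (img x y) (f y).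
Proof.
  intros Hxy. destruct (path_mem HP Hxy) as [Hx Hy].
  pose proof (path_refl HP Hx). pose proof (path_refl HP Hy).
  split; split; simpl.
  - exists x; repeat split; auto.
  - intros t [w [[H1 H2] <-]]. apply image_le; auto.
  - exists y; repeat split; auto.
  - intros t [w [[H1 H2] <-]]. apply image_le; auto.
Qed.

Lemma image_segment {c d u v} : injective_on f (in_seg P c d) ->
  ple P c u -> ple P u v -> ple P v d -> img u v = segment (img c d) (f u) (f v).
Proof.
  intros Hi Hcu Huv Hvd.
  assert (Hin : forall w, in_seg P u v w -> in_seg P c d w).
  { intros w [A B]. split; [exact (path_trans HP Hcu A) | exact (path_trans HP B Hvd)]. }
  pose proof (path_trans HP Huv Hvd) as Hud. pose proof (path_trans HP Hcu Huv) as Hcv.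
  assert (Hu : in_seg P c d u) by (split; auto).
  assert (Hv : in_seg P c d v) by (split; auto).
  assert (Hs : forall t, pset (img u v) t <-> pset (segment (img c d) (f u) (f v)) t).
  { intro t; simpl; unfold in_seg; simpl; split.
    - intros [w [Hw' <-]]. destruct (Hin w Hw') as [Hw3 Hw4]. destruct Hw' as [Hw1 Hw2].
      split; [exists u, w | exists w, v]; repeat split; auto.
    - intros [[w1 [w2 [A1 [A2 [Le [E1 E2]]]]]] [w3 [w4 [B1 [B2 [Le' [E3 E4]]]]]]].
      assert (w1 = u) by (apply Hi; auto). subst w1.
      assert (w4 = v) by (apply Hi; auto). subst w4.
      assert (w3 = w2) by (apply Hi; auto; congruence). subst w3.
      exists w2; repeat split; auto. }
  apply path_ext; [exact Hs|].
  intros p q. simpl. unfold in_seg at 3 4. split.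
  - intros [w1 [w2 [A1 [A2 [Le [<- <-]]]]]].
    split; [exists w1, w2; repeat split; auto; apply Hin; auto|].
    split; [apply (Hs (f w1)) | apply (Hs (f w2))]; simpl; eauto.
  - intros [[w1 [w2 [A1 [A2 [Le [<- <-]]]]]] [Hp Hq]].
    apply (Hs (f w1)) in Hp. apply (Hs (f w2)) in Hq.
    destruct Hp as [w [Hw1 E]]. destruct Hq as [w' [Hw2 E']].
    assert (w = w1) by (apply Hi; auto). subst w.
    assert (w' = w2) by (apply Hi; auto). subst w'.
    exists w1, w2; repeat split; auto; apply Hw1 || apply Hw2.
Qed.

Lemma image_concat {x m y} : injective_on f (in_seg P x y) -> ple P x m -> ple P m y ->
  img x y = concat (img x m) (img m y) /\ connects (img x m) (img m y).
Proof.
  intros Hi Hxm Hmy.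
  destruct (path_mem HP Hxm) as [Hx Hm]. destruct (path_mem HP Hmy) as [_ Hy].
  assert (Hsplit : forall w, in_seg P x y w <-> in_seg P x m w \/ in_seg P m y w).
  { intro w; unfold in_seg; split.
    - intros [A B]. destruct (path_total HP Hm (proj2 (path_mem HP A))); auto.
    - intros [[A B]|[A B]]; split; auto.
      + exact (path_trans HP B Hmy).
      + exact (path_trans HP Hxm A). }
  split.
  - apply path_ext.
    + intro t; simpl. split.
      * intros [w [Hw' E]]. apply Hsplit in Hw'. destruct Hw'; eauto.
      * intros [[w [Hw' E]]|[w [Hw' E]]]; exists w; split; auto; apply Hsplit; auto.
    + intros p q; simpl. split.
      * intros [w1 [w2 [A1 [A2 [Le [<- <-]]]]]].
        apply Hsplit in A1. apply Hsplit in A2.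
        destruct A1 as [A1|A1]; destruct A2 as [A2|A2].
        -- left. exists w1, w2; auto.
        -- right; right. split; eauto.
        -- assert (w1 = m)
             by (apply (path_antisym HP); [exact (path_trans HP Le (proj2 A2)) | apply A1]).
           subst w1. left. exists m, w2.
           repeat split; auto; try apply A2; apply (path_refl HP); auto.
        -- right; left. exists w1, w2; auto.
      * intros [[w1 [w2 [A1 [A2 [Le [<- <-]]]]]]|[[w1 [w2 [A1 [A2 [Le [<- <-]]]]]]|
               [[w1 [A1 <-]] [w2 [A2 <-]]]]];
          exists w1, w2; repeat split; try (apply Hsplit; auto); auto.
        exact (path_trans HP (proj2 A1) (proj1 A2)).
  - exists (f m). split; [|split; apply image_minmax; auto].
    intro t; simpl; split.
    + intros [[w1 [A1 <-]] [w2 [A2 E]]].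
      assert (w2 = w1) by (apply Hi; auto; apply Hsplit; auto). subst w2.
      f_equal. apply (path_antisym HP); [apply A1 | apply A2].
    + intros ->. split; exists m; repeat split; auto; apply (path_refl HP); auto.
Qed.

End Images.

Section Walk.
Context {U T : Type} (PP : path T -> Prop) (P : path U) (f : U -> T).
Hypotheses (HPP : dipath_space PP) (HP : is_path P) (Hw : walk PP P f).

Local Notation img := (image_path P f).

Definition admissible x y := injective_on f (in_seg P x y) /\ PP (img x y).

Lemma S_f_sub R : S_f PP P f R -> PP R.
Proof. intros [x [y [_ [_ [H ->]]]]]; exact H. Qed.

Lemma induced_dipath_space : dipath_space (induced PP P f).
Proof. apply (hat_dipath_space PP); auto using S_f_sub. Qed.

Lemma induced_path R : induced PP P f R -> is_path R.
Proof. apply induced_dipath_space. Qed.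

(** A single point is admissible: its image is the trivial segment of any
    path of [PP] through [f a]. *)
Lemma admissible_refl a : pset P a -> admissible a a.
Proof.
  intros Ha. pose proof (path_refl HP Ha) as Haa.
  assert (Hone : forall w, in_seg P a a w -> w = a)
    by (intros w [A B]; apply (path_antisym HP); auto).
  split; [intros u v Hu Hv _; rewrite (Hone u Hu), (Hone v Hv); auto|].
  destruct (proj1 Hw a Ha) as [R [HR Hfa]].
  pose proof (proj1 HPP R HR) as PR. pose proof (path_refl PR Hfa) as Hrr.
  assert (Hone' : forall t, in_seg R (f a) (f a) t -> t = f a)
    by (intros t [A B]; apply (path_antisym PR); auto).
  replace (img a a) with (segment R (f a) (f a)); [apply HPP; auto|].
  apply path_ext.
  - intro t; simpl; split.
    + intros Ht. rewrite (Hone' t Ht). exists a; repeat split; auto.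
    + intros [w [Hw' <-]]. rewrite (Hone w Hw'). split; auto.
  - intros p q; simpl; split.
    + intros [_ [Hp Hq]]. rewrite (Hone' p Hp), (Hone' q Hq).
      exists a, a; repeat split; auto.
    + intros [w1 [w2 [A1 [A2 [_ [<- <-]]]]]].
      rewrite (Hone w1 A1), (Hone w2 A2). repeat split; auto.
Qed.

Lemma walk_chain : exists a m L, is_min P a /\ is_max P m /\ chain P admissible a m L.
Proof. apply exists_chain; [exact HP | exact admissible_refl | exact (proj2 Hw)]. Qed.

Definition pieces (L : list (U * U)) : list (path T) :=
  map (fun p => img (fst p) (snd p)) L.

Lemma piece_S_f {a m L} R : chain P admissible a m L -> In R (pieces L) -> S_f PP P f R.
Proof.
  intros Hch HR. apply in_map_iff in HR. destruct HR as [[c d] [<- Hcd]].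
  destruct (chain_pieces P admissible Hch c d Hcd) as [Hle [Hi Hpp]].
  exists c, d; auto.
Qed.

(** The images of the pieces of a covering chain generate [f]'s induced space:
    an admissible image is cut by the chain into segments of pieces. *)
Lemma induced_finitary : finitary (induced PP P f).
Proof.
  destruct walk_chain as [a [m [L [Hamin [Hmmax Hch]]]]].
  assert (Hgen : forall u v, ple P u v -> injective_on f (in_seg P u v) ->
                  hat (fun R => In R (pieces L)) (img u v)).
  { intros u v Huv. destruct (path_mem HP Huv) as [Hu Hv].
    refine (chain_glue P admissible HP
      (fun u v => injective_on f (in_seg P u v) -> hat (fun R => In R (pieces L)) (img u v))
      Hch _ _ u v (proj2 Hamin u Hu) Huv (proj2 Hmmax v Hv)).
    - intros c d u' v' Hcd Hcu Huv' Hvd _.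
      destruct (chain_pieces P admissible Hch c d Hcd) as [_ [Hi _]].
      rewrite (image_segment P f HP Hi Hcu Huv' Hvd).
      apply hat_seg; [apply in_map_iff; exists (c, d); auto | apply (image_le P f HP); auto].
    - intros u' s v' Hus Hsv IH1 IH2 Hi.
      destruct (image_concat P f HP Hi Hus Hsv) as [-> Hcon].
      apply hat_cat; auto.
      + apply IH1, (injective_on_sub P f HP Hi); auto.
        apply (path_refl HP), (path_mem HP Hus).
      + apply IH2, (injective_on_sub P f HP Hi); auto.
        apply (path_refl HP), (path_mem HP Hsv). }
  exists (pieces L). split; [intros R HR; apply HPP, S_f_sub, (piece_S_f R Hch HR)|].
  intro R; split; [apply hat_mono; intros X; apply (piece_S_f X Hch)|].
  induction 1 as [B x y HB Hxy|]; [|apply hat_cat; auto].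
  destruct HB as [x' [y' [_ [Hi [_ ->]]]]].
  destruct Hxy as [w1 [w2 [A1 [A2 [Le [<- <-]]]]]].
  rewrite <- (image_segment P f HP Hi (proj1 A1) Le (proj2 A2)).
  apply Hgen, (injective_on_sub P f HP Hi (proj1 A1) (proj2 A2)); auto.
Qed.

(** Any two points of the walk, in order, are joined by a path of the induced
    space: inside a piece take a segment, and glue along the chain. *)
Lemma walk_reach u v : ple P u v -> reach (induced PP P f) (f u) (f v).
Proof.
  intros Huv. destruct (path_mem HP Huv) as [Hu Hv].
  destruct walk_chain as [a [m [L [Hamin [Hmmax Hch]]]]].
  refine (chain_glue P admissible HP (fun u v => reach (induced PP P f) (f u) (f v)) Hch
    _ _ u v (proj2 Hamin u Hu) Huv (proj2 Hmmax v Hv)).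
  - intros c d u' v' Hcd Hcu Huv' Hvd.
    destruct (chain_pieces P admissible Hch c d Hcd) as [Hle [Hi Hpp]].
    pose proof (image_le P f HP Hcu Huv' Hvd) as Hle'.
    exists (segment (img c d) (f u') (f v')); split.
    + apply hat_seg; [exists c, d; auto | exact Hle'].
    + apply segment_minmax_path; [apply HPP, Hpp | exact Hle'].
  - intros u' s v' _ _. apply reach_trans, induced_dipath_space.
Qed.

Lemma ground_induced x : ground (bar (induced PP P f)) x -> exists u, pset P u /\ x = f u.
Proof.
  intros Hx. apply ground_bar, ground_hat in Hx;
    [|intros R HR; apply HPP, S_f_sub, HR | apply induced_path].
  destruct Hx as [R [[c [d [_ [_ [_ ->]]]]] [u [[Hcu _] <-]]]].
  exists u; split; [apply (path_mem HP Hcu) | reflexivity].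
Qed.

Lemma induced_connected : dps_connected (induced PP P f).
Proof.
  split.
  - destruct (path_min P HP) as [a [Ha _]].
    destruct (reach_sim _ _ _ induced_path (walk_reach a a (path_refl HP Ha)))
      as [[R [HR [Hmin _]]] _].
    exists (f a), R; split; [exact HR | apply Hmin].
  - intros x y Hx Hy.
    destruct (ground_induced x Hx) as [u [Hu ->]].
    destruct (ground_induced y Hy) as [v [Hv ->]].
    destruct (path_total HP Hu Hv) as [Huv|Hvu].
    + apply (reach_sim _ _ _ induced_path (walk_reach u v Huv)).
    + apply (reach_sim _ _ _ induced_path (walk_reach v u Hvu)).
Qed.

End Walk.

Theorem mainTheorem3 (U T : Type) (PP : path T -> Prop) (P : path U) (f : U -> T) :
  dipath_space PP -> is_path P -> walk PP P f ->
  finitary (induced PP P f) /\ dps_connected (induced PP P f).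
Proof.
  intros HPP HP Hw.
  split; [apply induced_finitary | apply induced_connected]; assumption.
Qed.
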